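(* Let $(G,\cdot)$ and $(H,\circ)$ be WIPLs and let $(A,B,C)$ be an isotopism from $(G,\cdot)$ to $(H,\circ)$. Then for all $x\in G$, $$J_\lambda R_x J_\rho B=C J_\lambda' R_{xA}' J_\rho' \quad\text{and}\quad J_\rho L_x J_\lambda A=C J_\rho' L_{xB}' J_\lambda'.$$
   Context: Maps are written on the right of their arguments ($xU$) and composed left to right: $UV$ means first apply $U$, then $V$. For a loop $(L,\cdot)$ with identity $e$, $x^\rho$ and $x^\lambda$ denote the right and left inverses of $x$ ($x x^\rho=e=x^\lambda x$), and $J_\rho:x\mapsto x^\rho$, $J_\lambda:x\mapsto x^\lambda$, $L_x:y\mapsto xy$, $R_x:y\mapsto yx$. For the loop $(H,\circ)$ (identity $e'$) the corresponding maps are denoted $J_\rho'$ ($y\mapsto y^{\rho'}$), $J_\lambda'$ ($y\mapsto y^{\lambda'}$), $L_y':z\mapsto y\circ z$, $R_y':z\mapsto z\circ y$. $L$ is a weak inverse property loop (WIPL) if $xy\cdot z=e$ implies $x\cdot yz=e$ for all $x,y,z\in L$. A triple $(U,V,W)$ of bijections $G\to H$ between loops $(G,\cdot)$ and $(H,\circ)$ is an isotopism if $xU\circ yV=(x\cdot y)W$ for all $x,y\in G$. *)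

From Stdlib Require Import Program.Basics.

Record loop := Loop {
  carrier :> Type;
  op : carrier -> carrier -> carrier;
  e : carrier;
  ldiv : carrier -> carrier -> carrier;
  rdiv : carrier -> carrier -> carrier;
  op_e_l : forall x, op e x = x;
  op_e_r : forall x, op x e = x;
  ldiv_spec : forall a b, op a (ldiv a b) = b;
  ldiv_uniq : forall a b x, op a x = b -> x = ldiv a b;
  rdiv_spec : forall a b, op (rdiv b a) a = b;
  rdiv_uniq : forall a b y, op y a = b -> y = rdiv b a
}.

Arguments op {l} _ _.
Arguments e {l}.

Definition rinv {L : loop} (x : L) : L := ldiv L x e.
Definition linv {L : loop} (x : L) : L := rdiv L e x.

Definition Jrho {L : loop} : L -> L := fun x => rinv x.
Definition Jlam {L : loop} : L -> L := fun x => linv x.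
Definition Lmap {L : loop} (x : L) : L -> L := fun y => op x y.
Definition Rmap {L : loop} (x : L) : L -> L := fun y => op y x.

Definition WIPL (L : loop) : Prop :=
  forall x y z : L, op (op x y) z = e -> op x (op y z) = e.

Definition bijective {A B : Type} (f : A -> B) : Prop :=
  exists g : B -> A, (forall a, g (f a) = a) /\ (forall b, f (g b) = b).

Definition isotopism {G H : loop} (U V W : G -> H) : Prop :=
  bijective U /\ bijective V /\ bijective W /\
  forall x y : G, op (U x) (V y) = W (op x y).

(* Left-to-right composition: (f ;; g) x = g (f x)  (maps act on the right) *)
Definition seqc {A B C : Type} (f : A -> B) (g : B -> C) : A -> C :=
  fun x => g (f x).
Infix ";;" := seqc (at level 40, left associativity).


(* In a WIPL the maps  J_lambda R_x J_rho  and  J_rho L_x J_lambda  are the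
   left and right division maps:  (y^lambda x)^rho = x \ y  and
   (x y^rho)^lambda = y / x.  An isotopism (A,B,C) carries divisions to
   divisions:  (x \ y)B = xA \ yC  and  (y / x)A = yC / xB,  because
   xA o (x \ y)B = (x (x \ y))C = yC.  Composing the two facts (in G and in H)
   gives both identities of the theorem. *)

Section Inverses.

Variable L : loop.

Lemma rinv_of_op_e (x y : L) : op x y = e -> y = rinv x.
Proof. apply ldiv_uniq. Qed.

Lemma linv_of_op_e (x y : L) : op x y = e -> x = linv y.
Proof. apply rdiv_uniq. Qed.

Lemma op_rinv (x : L) : op x (rinv x) = e.
Proof. apply ldiv_spec. Qed.

Lemma op_linv (x : L) : op (linv x) x = e.
Proof. apply rdiv_spec. Qed.

Lemma rinv_linv (y : L) : rinv (linv y) = y.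
Proof. symmetry; apply rinv_of_op_e, op_linv. Qed.

Lemma linv_rinv (y : L) : linv (rinv y) = y.
Proof. symmetry; apply linv_of_op_e, op_rinv. Qed.

End Inverses.

Section WeakInverseProperty.

Variable L : loop.
Hypothesis wipL : WIPL L.

(* The weak inverse property also holds with the parentheses moved to the
   right: if x(yz) = e then z is forced to be (xy)^rho. *)
Lemma wipl_assoc_r (x y z : L) : op x (op y z) = e -> op (op x y) z = e.
Proof.
  intros Hxyz.
  set (w := rinv (op x y)).
  assert (Hxyw : op x (op y w) = e) by (apply wipL, op_rinv).
  assert (Hyw_yz : op y w = op y z).
  { rewrite (rinv_of_op_e _ _ _ Hxyw), (rinv_of_op_e _ _ _ Hxyz).
    reflexivity. }
  assert (Hwz : w = z).
  { rewrite (ldiv_uniq _ _ _ _ Hyw_yz). symmetry; apply ldiv_uniq; reflexivity. }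
  rewrite <- Hwz; apply op_rinv.
Qed.

Lemma rinv_linv_op (x y : L) : rinv (op (linv y) x) = ldiv L x y.
Proof.
  apply ldiv_uniq.
  assert (H : op (linv y) (op x (rinv (op (linv y) x))) = e)
    by (apply wipL, op_rinv).
  rewrite (rinv_of_op_e _ _ _ H), rinv_linv. reflexivity.
Qed.

Lemma linv_op_rinv (x y : L) : linv (op x (rinv y)) = rdiv L y x.
Proof.
  apply rdiv_uniq.
  assert (H : op (op (linv (op x (rinv y))) x) (rinv y) = e)
    by (apply wipl_assoc_r, op_linv).
  rewrite (linv_of_op_e _ _ _ H), linv_rinv. reflexivity.
Qed.

End WeakInverseProperty.

Section IsotopismDivision.

Variables G H : loop.
Variables A B C : G -> H.
Hypothesis isoABC : forall x y : G, op (A x) (B y) = C (op x y).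

(* An isotopism maps divisions to divisions (only the isotopy identity is
   needed, not bijectivity). *)
Lemma isotopism_ldiv (x y : G) : B (ldiv G x y) = ldiv H (A x) (C y).
Proof. apply ldiv_uniq. rewrite isoABC, ldiv_spec. reflexivity. Qed.

Lemma isotopism_rdiv (x y : G) : A (rdiv G y x) = rdiv H (C y) (B x).
Proof. apply rdiv_uniq. rewrite isoABC, rdiv_spec. reflexivity. Qed.

End IsotopismDivision.

Theorem mainTheorem7 (G H : loop) (A B C : G -> H) :
  WIPL G -> WIPL H -> isotopism A B C ->
  forall x : G,
    (forall y : G, (Jlam ;; Rmap x ;; Jrho ;; B) y
                   = (C ;; Jlam ;; Rmap (A x) ;; Jrho) y) /\
    (forall y : G, (Jrho ;; Lmap x ;; Jlam ;; A) y
                   = (C ;; Jrho ;; Lmap (B x) ;; Jlam) y).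
Proof.
  intros wipG wipH [_ [_ [_ isoABC]]] x.
  split; intro y; unfold seqc, Jlam, Jrho, Rmap, Lmap.
  - rewrite (rinv_linv_op G wipG), (rinv_linv_op H wipH).
    apply isotopism_ldiv, isoABC.
  - rewrite (linv_op_rinv G wipG), (linv_op_rinv H wipH).
    apply isotopism_rdiv, isoABC.
Qed.
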